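(* Let $\mathcal{T},\mathcal{U},\mathcal{B}$ be tile sets with mutually consistent frequencies and let $U\in\mathcal{U}$. Then \[ d(\mathcal{T}\cup\{U\},\mathcal{U};\mathcal{B})\le d(\mathcal{T},\mathcal{U};\mathcal{B}). \]
   Context: Fix $n,m\ge1$; $\mathcal{D}$ is the set of $n\times m$ binary matrices. A tile is $T=(t(T),a(T))$ with nonempty $t(T)\subseteq\{1..n\}$, $a(T)\subseteq\{1..m\}$, $\mathrm{area}(T)=t(T)\times a(T)$. $\mathrm{fr}(T;D)=\frac1{|\mathrm{area}(T)|}\sum_{(i,j)\in\mathrm{area}(T)}D(i,j)$, $\mathrm{fr}(T;p)=\sum_Dp(D)\mathrm{fr}(T;D)$. Each tile carries a target frequency $\alpha_T$; tile sets are consistent if some distribution on $\mathcal{D}$ attains all target frequencies simultaneously. For a tile set $\mathcal{T}$, $p^*_{\mathcal{T}}$ is the entropy-maximising distribution among those with $\mathrm{fr}(T;p)=\alpha_T$ for all $T\in\mathcal{T}$. $\mathrm{KL}(\mathcal{T}\|\mathcal{U})=\mathrm{KL}(p^*_{\mathcal{T}}\|p^*_{\mathcal{U}})$. With $\mathcal{M}=\mathcal{T}\cup\mathcal{U}\cup\mathcal{B}$, $d(\mathcal{T},\mathcal{U};\mathcal{B})=\frac{\mathrm{KL}(\mathcal{M}\|\mathcal{U}\cup\mathcal{B})+\mathrm{KL}(\mathcal{M}\|\mathcal{T}\cup\mathcal{B})}{\mathrm{KL}(\mathcal{M}\|\mathcal{B})}$, defined as $1$ if $\mathrm{KL}(\mathcal{M}\|\mathcal{B})=0$.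 *)

From HB Require Import structures.
From mathcomp Require Import all_boot.
From Stdlib Require Import Reals ClassicalEpsilon.

Set Implicit Arguments.
Unset Strict Implicit.
Unset Printing Implicit Defensive.

(* Indices {1..n} are rendered as 'I_n = {0..n-1}. *)

Definition mat (n m : nat) := {ffun 'I_n * 'I_m -> bool}.

Record tile (n m : nat) := Tile { trows : {set 'I_n}; tcols : {set 'I_m} }.

Definition tile_nonempty n m (T : tile n m) : Prop :=
  trows T != set0 /\ tcols T != set0.

Definition area n m (T : tile n m) : {set 'I_n * 'I_m} :=
  setX (trows T) (tcols T).

Definition fr_mat n m (T : tile n m) (D : mat n m) : R :=
  (/ INR #|area T| *
   \big[Rplus/0%R]_(ij in area T) (if D ij then 1%R else 0%R))%R.

Definition is_dist n m (p : mat n m -> R) : Prop :=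
  (forall D, (0 <= p D)%R) /\ \big[Rplus/0%R]_(D : mat n m) p D = 1%R.

Definition fr n m (T : tile n m) (p : mat n m -> R) : R :=
  \big[Rplus/0%R]_(D : mat n m) (p D * fr_mat T D)%R.

(* A tile set: a finite collection of tiles, each carrying its target
   frequency alpha_T.  Union of tile sets is list concatenation. *)
Definition tileset n m := list (tile n m * R).

Definition satisfies n m (S : tileset n m) (p : mat n m -> R) : Prop :=
  is_dist p /\ forall Ta, List.In Ta S -> fr Ta.1 p = Ta.2.

Definition consistent n m (S : tileset n m) : Prop :=
  exists p, satisfies S p.

(* Shannon entropy (with 0 ln 0 = 0, since 0 * _ = 0) *)
Definition entropy n m (p : mat n m -> R) : R :=
  (- \big[Rplus/0%R]_(D : mat n m) (p D * ln (p D)))%R.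

Definition is_maxent n m (S : tileset n m) (p : mat n m -> R) : Prop :=
  satisfies S p /\ forall q, satisfies S q -> (entropy q <= entropy p)%R.

(* p*_S : the entropy-maximising distribution subject to the constraints
   of S (chosen by Hilbert's epsilon; it exists and is unique whenever S
   is consistent). *)
Definition maxent n m (S : tileset n m) : mat n m -> R :=
  epsilon (inhabits (fun _ : mat n m => 0%R)) (is_maxent S).

(* KL(p || q) = sum_D p(D) ln(p(D)/q(D)), terms with p(D)=0 being 0 *)
Definition KL n m (p q : mat n m -> R) : R :=
  \big[Rplus/0%R]_(D : mat n m) (p D * ln (p D / q D))%R.

Definition KLts n m (S S' : tileset n m) : R := KL (maxent S) (maxent S').

Definition dscore n m (T U B : tileset n m) : R :=
  let M := (T ++ U ++ B)%list in
  let den := KLts M B in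
  if Req_EM_T den 0%R then 1%R
  else ((KLts M (U ++ B)%list + KLts M (T ++ B)%list) / den)%R.

(* Let q = p*_S be the maximum-entropy distribution of a consistent tile set S.
   The constraints of S are affine, so q maximises the entropy on the whole line
   through q and any distribution p satisfying S, as far as it stays in the simplex.
   Because x ln x has infinite slope at 0, this forces supp p to lie in supp q;
   the first variation sum_D (p D - q D) ln (q D) must then vanish, which is the
   Pythagorean identity KL(p || q) = H(q) - H(p).

   With M = T ∪ U ∪ B and u ∈ U, adding u to T leaves M, hence p*_M, unchanged,
   and with it the denominator KL(M || B) = H(p*_B) - H(p*_M) >= 0 and the summand
   KL(M || U ∪ B).  The remaining summand becomes H(p*_(u ∪ T ∪ B)) - H(p*_M),
   which is at most H(p*_(T ∪ B)) - H(p*_M): more constraints can only lower the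
   maximal entropy. *)

From HB Require Import structures.
From Stdlib Require Import Reals ClassicalEpsilon.
From mathcomp Require Import all_boot all_order all_algebra.
From mathcomp Require Import all_classical all_reals all_analysis.
From mathcomp Require Import Rstruct Rstruct_topology.
From mathcomp Require Import ring lra.
Import Order.TTheory GRing.Theory Num.Theory numFieldNormedType.Exports.
Local Open Scope classical_set_scope.
Local Open Scope ring_scope.

Section xlnx.
Context {R : realType}.

Definition xlnx (x : R) : R := x * ln x.

Lemma xlnx_eq0 (x : R) : x <= 0 -> xlnx x = 0.
Proof. by move=> x_le0; rewrite /xlnx ln0 ?mulr0. Qed.

Lemma xlnx_le0 (x : R) : 0 <= x <= 1 -> xlnx x <= 0.
Proof. by case/andP=> x_ge0 x_le1; rewrite /xlnx mulr_ge0_le0 ?ln_le0. Qed.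

Lemma norm_xlnx_le (t : R) : 0 < t <= 1 -> `|xlnx t| <= 2 * Num.sqrt t.
Proof.
case/andP=> t_gt0 t_le1; set s := Num.sqrt t.
have s_gt0 : 0 < s by rewrite sqrtr_gt0.
have tE : t = s * s by rewrite -expr2 sqr_sqrtr ?ltW.
(* [ln (1/s) < 1/s] bounds [- s ln s] by [1] *)
have : - ln s < s^-1 by rewrite -lnV ?posrE // ln_sublinear ?invr_gt0.
rewrite -(ltr_pM2l s_gt0) mulfV ?gt_eqF // => sln_lt1.
rewrite ler0_norm ?xlnx_le0 ?(ltW t_gt0) ?t_le1 // /xlnx tE lnM ?posrE //.
nra.
Qed.

Lemma continuous_xlnx : continuous xlnx.
Proof.
move=> x; have [x_lt0|x_gt0|->] := ltgtP x 0.
- rewrite /continuous_at xlnx_eq0 ?ltW //; apply: cvg_near_cst.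
  by near=> y; apply: xlnx_eq0; apply: ltW; near: y; exact: lt_nbhsl.
- exact: continuousM cvg_id (continuous_ln x_gt0).
rewrite /continuous_at xlnx_eq0 //; apply/(@cvgrPdist_lt _ R^o) => e e_gt0.
exists (Num.min 1 ((e / 2) ^+ 2)); first by rewrite /= lt_min ltr01 exprn_gt0 ?divr_gt0.
move=> t /=; rewrite !sub0r !normrN lt_min => /andP[t_lt1 t_lt].
have [t_le0|t_gt0] := lerP t 0; first by rewrite xlnx_eq0 ?normr0.
rewrite gtr0_norm // in t_lt1 t_lt.
have e2_gt0 : 0 < e / 2 by rewrite divr_gt0.
have : Num.sqrt t < e / 2.
  by rewrite -(gtr0_norm e2_gt0) -sqrtr_sqr ltr_sqrt ?exprn_gt0.
have := @norm_xlnx_le t; rewrite t_gt0 ltW //=; lra.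
Unshelve. all: by end_near.
Qed.

(* from [ln y <= y - 1] at [y = r / q] *)
Lemma xlnx_le_quadratic (q r : R) : 0 < q -> 0 <= r ->
  xlnx r <= xlnx q + (r - q) * (ln q + 1) + (r - q) ^+ 2 / q.
Proof.
move=> q_gt0 r_ge0.
have -> : xlnx q + (r - q) * (ln q + 1) + (r - q) ^+ 2 / q
    = r * ln q + r * (r / q - 1) by rewrite /xlnx; field; rewrite gt_eqF.
have [->|r_neq0] := eqVneq r 0; first by rewrite /xlnx !mul0r addr0.
have r_gt0 : 0 < r by rewrite lt0r r_neq0.
have : ln (r / q) <= r / q - 1.
  have := @le_ln1Dx R (r / q - 1); rewrite [1 + _]addrC subrK; apply.
  have := divr_gt0 r_gt0 q_gt0; lra.
rewrite ln_div ?posrE // /xlnx; nra.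
Qed.

Lemma xlnx_scale_le (s x : R) : 0 < s -> 0 <= x <= 1 -> xlnx (s * x) <= s * x * ln s.
Proof.
move=> s_gt0 /andP[x_ge0 x_le1]; have [->|x_neq0] := eqVneq x 0.
  by rewrite mulr0 xlnx_eq0 ?mul0r.
rewrite /xlnx lnM ?posrE ?s_gt0 ?lt0r ?x_neq0 ?x_ge0 //.
have := ln_le0 x_le1; have := mulr_ge0 (ltW s_gt0) x_ge0; nra.
Qed.

(* At [q = 0] the junk values [ln 0 = 0] and [x / 0 = 0] reduce the right-hand
   side to [s * p * ln s]. *)
Lemma xlnx_line_le (q p s : R) : 0 <= q -> 0 <= p <= 1 ->
  0 <= q + s * (p - q) -> (q = 0 -> 0 < s \/ p = 0) ->
  xlnx (q + s * (p - q)) <=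
  xlnx q + s * ((p - q) * ln q) + s * (p - q) + s ^+ 2 * ((p - q) ^+ 2 / q)
  - s * (1 - ln s) * (if q == 0 then p else 0).
Proof.
move=> q_ge0 p01 r_ge0 q0_s; have [q0|q_neq0] := eqVneq q 0.
  rewrite q0 in r_ge0 *; rewrite ln0 // invr0 [xlnx 0]xlnx_eq0 //.
  rewrite !(mulr0, mul0r, subr0, addr0, add0r) in r_ge0 *.
  have [s_gt0|->] := q0_s q0; last by rewrite !(mulr0, subr0) xlnx_eq0.
  by have := xlnx_scale_le s p s_gt0 p01; lra.
have q_gt0 : 0 < q by rewrite lt0r q_neq0.
apply: le_trans (xlnx_le_quadratic q _ q_gt0 r_ge0) _.
by rewrite le_eqVlt; apply/orP; left; apply/eqP; ring.
Qed.

Lemma ge0_of_small_quadratic (x K c : R) : 0 < c -> 0 <= K ->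
  (forall s, 0 < s -> s <= c -> 0 <= s * x + s ^+ 2 * K) -> 0 <= x.
Proof.
move=> c_gt0 K_ge0 small; rewrite leNgt; apply/negP => x_lt0.
pose s := Num.min c (- x / (K + 1)).
have K1_gt0 : 0 < K + 1 by rewrite ltr_wpDl.
have s_gt0 : 0 < s by rewrite lt_min c_gt0 divr_gt0 // oppr_gt0.
have sK_le : s * (K + 1) <= - x by rewrite -ler_pdivlMr // ge_min lexx orbT.
have s_le_c : s <= c by rewrite ge_min lexx.
have := small s s_gt0 s_le_c.
have : 0 <= s * (- x - s * (K + 1)) by rewrite mulr_ge0 // ?subr_ge0 // ltW.
nra.
Qed.

End xlnx.

Section maxent_line.
Context {R : realType} {I : finType} (p q : I -> R).
Hypotheses (p_ge0 : forall i, 0 <= p i) (p_sum1 : \sum_i p i = 1).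
Hypotheses (q_ge0 : forall i, 0 <= q i) (q_sum1 : \sum_i q i = 1).
Hypothesis q_max : forall s : R, (forall i, 0 <= q i + s * (p i - q i)) ->
  \sum_i xlnx (q i) <= \sum_i xlnx (q i + s * (p i - q i)).

Let p01 i : 0 <= p i <= 1.
Proof.
rewrite p_ge0 -p_sum1 (bigD1 i) //= lerDl.
by apply: sumr_ge0 => j _; exact: p_ge0.
Qed.

Let line_ge0 (s : R) : 0 <= s <= 1 -> forall i, 0 <= q i + s * (p i - q i).
Proof.
case/andP=> s_ge0 s_le1 i; have := p_ge0 i; have := q_ge0 i; nra.
Qed.

Let slope := \sum_i (p i - q i) * ln (q i).
Let curvature := \sum_i (p i - q i) ^+ 2 / q i.
Let escape := \sum_i (if q i == 0 then p i else 0).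

Let curvature_ge0 : 0 <= curvature.
Proof. by apply: sumr_ge0 => i _; rewrite divr_ge0 ?sqr_ge0. Qed.

Let expansion_ge0 (s : R) : (forall i, 0 <= q i + s * (p i - q i)) ->
  (forall i, q i = 0 -> 0 < s \/ p i = 0) ->
  0 <= s * slope + s ^+ 2 * curvature - s * (1 - ln s) * escape.
Proof.
move=> r_ge0 q0_s; have := q_max s r_ge0.
have sum_pq0 : \sum_i (p i - q i) = 0 by rewrite sumrB p_sum1 q_sum1 subrr.
have : \sum_i xlnx (q i + s * (p i - q i)) <= \sum_i xlnx (q i) + s * slope
    + s ^+ 2 * curvature - s * (1 - ln s) * escape.
  apply: le_trans (ler_sum _ (fun i _ => xlnx_line_le _ _ _ (q_ge0 i) (p01 i) (r_ge0 i) (q0_s i))) _.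
  rewrite sumrB !big_split /= -!mulr_sumr sum_pq0.
  by rewrite /slope /curvature /escape; lra.
lra.
Qed.

Lemma maxent_line_support i : q i = 0 -> p i = 0.
Proof.
move=> qi0; apply/eqP; apply: contraT => pi_neq0.
have escape_gt0 : 0 < escape.
  apply: lt_le_trans (_ : p i <= escape); first by rewrite lt0r pi_neq0 p_ge0.
  rewrite /escape (bigD1 i) //= qi0 eqxx lerDl.
  by apply: sumr_ge0 => j _; case: ifP.
(* the entropy gain [- s ln s * escape] beats the first-order terms as [s -> 0] *)
pose c := (`|slope| + curvature) / escape.
pose s := expR (- c).
have s_gt0 : 0 < s := expR_gt0 _.
have c_ge0 : 0 <= c by rewrite divr_ge0 ?(ltW escape_gt0) // addr_ge0.
have s_le1 : s <= 1 by rewrite expR_le1 oppr_le0.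
have lns : ln s = - c by rewrite expRK.
have c_escape : c * escape = `|slope| + curvature by rewrite divfK ?gt_eqF.
have s01 : 0 <= s <= 1 by rewrite (ltW s_gt0) s_le1.
have := expansion_ge0 s (line_ge0 s s01) (fun _ _ => or_introl s_gt0).
rewrite lns.
have := ler_norm slope; have : s * curvature <= curvature by rewrite ler_piMl.
nra.
Qed.

Lemma maxent_line_slope : \sum_i (p i - q i) * ln (q i) = 0.
Proof.
have escape0 : escape = 0.
  by apply: big1 => i _; case: eqP => // /maxent_line_support.
have key (s : R) : (forall i, 0 <= q i + s * (p i - q i)) -> 0 <= s * slope + s ^+ 2 * curvature.
  move=> r_ge0; have := expansion_ge0 s r_ge0 (fun i qi0 => or_intror (maxent_line_support i qi0)).
  by rewrite escape0 mulr0 subr0.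
apply/eqP; rewrite eq_le; apply/andP; split; last first.
  apply: (ge0_of_small_quadratic _ _ _ ltr01 curvature_ge0) => s s_gt0 s_le1.
  by apply: key; apply: line_ge0; rewrite ltW.
(* [q - s (p - q)] stays nonnegative while [s] is below every positive [q i] *)
pose c := \big[Num.min/1]_(i | 0 < q i) q i.
have c_gt0 : 0 < c by apply/bigmin_gtP; split.
rewrite -oppr_ge0; apply: (ge0_of_small_quadratic _ _ _ c_gt0 curvature_ge0) => s s_gt0 s_le_c.
have -> : s * - slope + s ^+ 2 * curvature = - s * slope + (- s) ^+ 2 * curvature.
  by rewrite sqrrN mulrN mulNr.
apply: key => i.
have [qi0|qi_neq0] := eqVneq (q i) 0; first by rewrite qi0 (maxent_line_support i qi0); lra.
have qi_gt0 : 0 < q i by rewrite lt0r qi_neq0 q_ge0.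
have c_le_qi : c <= q i by apply: bigmin_le_cond.
case/andP: (p01 i) => pi_ge0 pi_le1; nra.
Qed.

Lemma maxent_line_KL :
  \sum_i p i * ln (p i / q i) = \sum_i xlnx (p i) - \sum_i xlnx (q i).
Proof.
have -> : \sum_i p i * ln (p i / q i) = \sum_i (xlnx (p i) - p i * ln (q i)).
  apply: eq_bigr => i _; have [->|pi_neq0] := eqVneq (p i) 0; first by rewrite /xlnx !mul0r subrr.
  have qi_gt0 : 0 < q i.
    by rewrite lt0r q_ge0 andbT; apply: contra pi_neq0 => /eqP/maxent_line_support ->.
  have pi_gt0 : 0 < p i by rewrite lt0r pi_neq0 p_ge0.
  by rewrite ln_div ?posrE ?pi_gt0 ?qi_gt0 // /xlnx; ring.
rewrite sumrB; congr (_ - _); have := maxent_line_slope.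
rewrite (eq_bigr (fun i => p i * ln (q i) - xlnx (q i))) => [|i _]; last by rewrite /xlnx mulrBl.
by rewrite sumrB => /eqP; rewrite subr_eq0 => /eqP.
Qed.

End maxent_line.

Lemma continuous_sum_ptws {I : finType} (f : I -> R -> R) :
  (forall i, continuous (f i)) -> continuous (fun p : {ptws I -> R} => \sum_i f i (p i)).
Proof.
move=> f_cont; apply: continuous_big => [|i _]; first exact: (@add_continuous R^o).
by move=> p; apply: continuous_comp; [exact: proj_continuous | exact: f_cont].
Qed.

Section distributions.
Context {n m : nat}.
Implicit Types (S : tileset n m) (p q : mat n m -> R).

Lemma is_distP p : is_dist p <-> (forall D, 0 <= p D) /\ \sum_D p D = 1.
Proof. by split=> -[p_ge0 p_sum1]; split=> // D; apply/RleP. Qed.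

Lemma entropyE p : entropy p = - \sum_D xlnx (p D).
Proof. by congr (- _); apply: eq_bigr => D _; rewrite RlnE. Qed.

Lemma KLE p q : KL p q = \sum_D p D * ln (p D / q D).
Proof. by apply: eq_bigr => D _; rewrite RlnE. Qed.

Lemma frE (T : tile n m) p : fr T p = \sum_D p D * fr_mat T D.
Proof. by []. Qed.

Lemma satisfies_line {S p q} (s : R) : satisfies S p -> satisfies S q ->
  (forall D, 0 <= q D + s * (p D - q D)) ->
  satisfies S (fun D => q D + s * (p D - q D)).
Proof.
move=> [/is_distP[_ p_sum1] p_fr] [/is_distP[_ q_sum1] q_fr] r_ge0.
split; first apply/is_distP; first split=> //.
  by rewrite big_split -mulr_sumr sumrB p_sum1 q_sum1 subrr mulr0; exact: addr0.
move=> Ta /[dup] /p_fr; rewrite !frE => p_frE /q_fr; rewrite frE => q_frE.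
under eq_bigr do rewrite mulrDl -mulrA mulrBl.
by rewrite big_split -mulr_sumr sumrB p_frE q_frE subrr mulr0; exact: addr0.
Qed.

Lemma closed_satisfies S : closed [set p : {ptws mat n m -> R} | satisfies S p].
Proof.
have -> : [set p : {ptws mat n m -> R} | satisfies S p] =
    \bigcap_D ((fun p : {ptws mat n m -> R} => p D) @^-1` [set x | 0 <= x])
    `&` ((fun p : {ptws mat n m -> R} => \sum_D p D) @^-1` [set 1])
    `&` \bigcap_(Ta in [set Ta | List.In Ta S]) ((fun p : {ptws mat n m -> R} => fr Ta.1 p) @^-1` [set Ta.2]).
  apply/seteqP; split=> p /=.
    move=> [/is_distP[p_ge0 p_sum1] p_fr]; split; first by split=> [D _|//]; exact: p_ge0.
    by move=> Ta /p_fr.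
  move=> [[p_ge0 p_sum1] p_fr]; split=> [|Ta /p_fr //].
  by apply/is_distP; split=> // D; exact: p_ge0.
apply: closedI; first apply: closedI.
- apply: closed_bigI => D _; apply: preimage_closed; last exact: closed_ge.
  by move=> p _; exact: (@proj_continuous _ (fun=> R)).
- apply: preimage_closed; last exact: closed_eq.
  by move=> p _; apply: (continuous_sum_ptws (fun _ x => x)) => D x; exact: cvg_id.
- apply: closed_bigI => Ta _; apply: preimage_closed; last exact: closed_eq.
  move=> p _; apply: (continuous_sum_ptws (fun D x => x * fr_mat Ta.1 D)) => D.
  by move=> x; apply: continuousM; [exact: cvg_id | exact: cvg_cst].
Qed.

Lemma maxent_exists S : consistent S -> exists q, is_maxent S q.
Proof.
move=> [p0 p0_sat].
pose A := [set p : {ptws mat n m -> R} | satisfies S p].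
have A_compact : compact A.
  apply: (subclosed_compact (closed_satisfies S)).
    exact: (tychonoff (fun _ => @segment_compact R 0 1)).
  move=> p [/is_distP[p_ge0 p_sum1] _] D; rewrite /= in_itv /= p_ge0 -p_sum1 (bigD1 D) //=.
  by rewrite lerDl sumr_ge0.
have entropy_cont : continuous (fun p : {ptws mat n m -> R} => entropy p).
  rewrite (_ : (fun p => entropy p) = fun p => - \sum_D xlnx (p D)); last first.
    by apply: funext => p; rewrite entropyE.
  move=> p; apply: (@continuousN R R^o).
  by apply: (continuous_sum_ptws (fun=> xlnx)) => D; exact: continuous_xlnx.
have [q q_sat q_max] := @compact_EVT_max _ _ _ A (ex_intro _ p0 p0_sat) A_compact (continuous_subspaceT entropy_cont).
by exists q; split=> [|p p_sat]; [rewrite inE in q_sat | apply/RleP/q_max; rewrite inE].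
Qed.

Lemma maxent_spec {S} : consistent S -> is_maxent S (maxent S).
Proof. by move=> S_cons; apply: epsilon_spec; exact: maxent_exists. Qed.

Lemma KL_maxent {S p q} : is_maxent S q -> satisfies S p -> KL p q = entropy q - entropy p.
Proof.
move=> [q_sat q_max] p_sat.
have [p_ge0 p_sum1] := (is_distP p).1 p_sat.1.
have [q_ge0 q_sum1] := (is_distP q).1 q_sat.1.
have q_line_max (s : R) : (forall D, 0 <= q D + s * (p D - q D)) ->
    \sum_D xlnx (q D) <= \sum_D xlnx (q D + s * (p D - q D)).
  move=> r_ge0; have /RleP := q_max _ (satisfies_line s p_sat q_sat r_ge0).
  by rewrite !entropyE lerN2.
by rewrite KLE (maxent_line_KL p q p_ge0 p_sum1 q_ge0 q_sum1 q_line_max) !entropyE opprK addrC.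
Qed.

End distributions.

Section tilesets.
Context {n m : nat}.
Implicit Types (S : tileset n m) (p : mat n m -> R).

Lemma satisfies_incl {S S' p} : List.incl S' S -> satisfies S p -> satisfies S' p.
Proof. by move=> S'S [p_dist p_fr]; split=> // Ta /S'S /p_fr. Qed.

Lemma consistent_incl {S S'} : List.incl S' S -> consistent S -> consistent S'.
Proof. by move=> S'S [p p_sat]; exists p; exact: satisfies_incl p_sat. Qed.

Lemma maxent_eq {S S'} : List.incl S S' -> List.incl S' S -> maxent S = maxent S'.
Proof.
move=> SS' S'S; have satE p : satisfies S p <-> satisfies S' p.
  by split; apply: satisfies_incl.
rewrite /maxent; congr epsilon; apply: funext => p; apply: propext.
by rewrite /is_maxent; split=> -[/satE p_sat p_max]; split=> // q /satE; exact: p_max.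
Qed.

Lemma maxent_cons_mem S Ta : List.In Ta S -> maxent (Ta :: S) = maxent S.
Proof.
by move=> Ta_S; apply: maxent_eq; [exact: List.incl_cons | exact/List.incl_tl/List.incl_refl].
Qed.

Lemma KL_maxent_incl S S' : List.incl S' S -> consistent S ->
  KL (maxent S) (maxent S') = entropy (maxent S') - entropy (maxent S).
Proof.
move=> S'S S_cons; apply: KL_maxent (maxent_spec (consistent_incl S'S S_cons)) _.
exact: satisfies_incl S'S (maxent_spec S_cons).1.
Qed.

Lemma entropy_maxent_incl S S' : List.incl S' S -> consistent S ->
  entropy (maxent S) <= entropy (maxent S').
Proof.
move=> S'S S_cons; apply/RleP; apply: (maxent_spec (consistent_incl S'S S_cons)).2.
exact: satisfies_incl S'S (maxent_spec S_cons).1.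
Qed.

End tilesets.

Theorem theorem9 (n m : nat) (hn : (0 < n)%N) (hm : (0 < m)%N)
  (T U B : tileset n m)
  (Hne : forall Ta, List.In Ta (T ++ U ++ B)%list -> tile_nonempty Ta.1)
  (Hcons : consistent (T ++ U ++ B)%list)
  (u : tile n m * R) (Hu : List.In u U) :
  Rle (dscore (u :: T) U B) (dscore T U B).
Proof.
set M := (T ++ U ++ B)%list.
have UB_M : List.incl (U ++ B) M by apply/List.incl_appr/List.incl_refl.
have B_M : List.incl B M by apply/List.incl_appr/List.incl_appr/List.incl_refl.
have TB_M : List.incl (T ++ B) M.
  exact: List.incl_app (List.incl_appl _ (List.incl_refl T)) B_M.
have u_M : List.In u M by apply/List.in_or_app; right; apply/List.in_or_app; left.
have uTB_M : List.incl (u :: T ++ B) M by exact: List.incl_cons.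
rewrite /dscore /KLts /= -/M maxent_cons_mem //.
case: Req_dec_T => _ /=; first exact: Rle_refl.
apply/RleP; rewrite !KL_maxent_incl //.
apply: ler_wpM2r; first by rewrite invr_ge0 subr_ge0 entropy_maxent_incl.
rewrite lerD2l lerD2r; apply: entropy_maxent_incl (consistent_incl uTB_M Hcons).
exact/List.incl_tl/List.incl_refl.
Qed.
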